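(* Let $\{X_1,X_2,\dots\}$ be a random dense countable subset of $(0,1)$ satisfying the independence condition and such that for every Borel set $B\subset(0,1)$ of Lebesgue measure $0$, $B\cap\{X_1,X_2,\dots\}=\emptyset$ a.s. If $\Pr(X_k=X_l)=0$ whenever $k\ne l$, then for every $n$ the joint distribution of $(X_1,\dots,X_n)$ is absolutely continuous with respect to Lebesgue measure on $(0,1)^n$.
   Context: A random countable subset of $(0,1)$ is given by random variables $X_1,X_2,\dots:\Omega\to(0,1)$ on a probability space, the set being $\omega\mapsto\{X_1(\omega),X_2(\omega),\dots\}$. It is dense if this set is dense in $(0,1)$ for a.e. $\omega$. Two random countable sets $\{X_k\},\{Y_k\}$ are identically distributed if some probability measure on $(0,1)^\infty\times(0,1)^\infty$ has marginals the laws of $(X_k)_k$ and $(Y_k)_k$ and is concentrated on pairs $(x,y)$ with $\{x_1,x_2,\dots\}=\{y_1,y_2,\dots\}$. Independence condition. For every $n\ge2$ and every $0=a_0<\dots<a_n=1$ there exist random variables $Y_{i,j}$ ($i\le n$, $j\ge1$) on some probability space such that: - $\{Y_{i,j}\}$ is distributed like $\{X_k\}$; - $Y_{i,j}\in[a_{i-1},a_i)$ a.s.; - the sequences $(Y_{i,j})_j$ are independent. *)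

From HB Require Import structures.
From mathcomp Require Import all_boot all_order all_algebra.
From mathcomp Require Import all_classical all_reals all_analysis.
Set Implicit Arguments. Unset Strict Implicit. Unset Printing Implicit Defensive.
Import Order.TTheory GRing.Theory Num.Theory.
Local Open Scope classical_set_scope.
Local Open Scope ring_scope.

Definition Rseq (R : realType) : Type := nat -> R.
HB.instance Definition _ (R : realType) := gen_eqMixin (Rseq R).
HB.instance Definition _ (R : realType) := gen_choiceMixin (Rseq R).
HB.instance Definition _ (R : realType) := isPointed.Build (Rseq R) (fun _ => 0%R).

Definition seq_measurable (R : realType) : set (set (Rseq R)) :=
  <<s \bigcup_(k in [set: nat])
        preimage_set_system [set: Rseq R] (fun x : Rseq R => x k)
          (measurable : set (set R)) >>.
Arguments seq_measurable : clear implicits.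

Section seq_measurable_instance.
Variable R : realType.
Let s0 : seq_measurable R set0. Proof. exact: sigma_algebra0. Qed.
Let sC A : seq_measurable R A -> seq_measurable R (~` A).
Proof. exact: sigma_algebraC. Qed.
Let sU (F : (set (Rseq R))^nat) : (forall i, seq_measurable R (F i)) ->
  seq_measurable R (\bigcup_i F i).
Proof. exact: sigma_algebra_bigcup. Qed.
HB.instance Definition _ := @isMeasurable.Build default_measure_display
  (Rseq R) (seq_measurable R) s0 sC sU.
End seq_measurable_instance.

(* Identically distributed random countable sets: a coupling of the laws of
   the two sequences, concentrated on pairs of sequences with equal ranges. *)
Definition same_set_distribution (R : realType)
  (d1 : measure_display) (T1 : measurableType d1) (P1 : probability T1 R)
  (X : nat -> T1 -> R)
  (d2 : measure_display) (T2 : measurableType d2) (P2 : probability T2 R)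
  (Y : nat -> T2 -> R) : Prop :=
  exists mu : probability (Rseq R * Rseq R)%type R,
    (forall A : set (Rseq R), measurable A ->
       mu (A `*` [set: Rseq R]) = P1 [set w | A (fun k => X k w)]) /\
    (forall A : set (Rseq R), measurable A ->
       mu ([set: Rseq R] `*` A) = P2 [set w | A (fun k => Y k w)]) /\
    (exists E : set (Rseq R * Rseq R)%type, measurable E /\
       E `<=` [set p | range p.1 = range p.2] /\ mu E = 1%E).

Definition indep_seqs (R : realType) (d : measure_display) (T : measurableType d)
  (P : probability T R) (n : nat) (Y : nat -> nat -> T -> R) : Prop :=
  forall A : nat -> set (Rseq R), (forall i, measurable (A i)) ->
    P (\bigcap_(i in `I_n) [set w | A i (fun j => Y i j w)]) =
    (\prod_(i < n) P [set w | A i (fun j => Y i j w)])%E.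

(* The independence condition.  Paper index i = 1..n corresponds to i = 0..n-1,
   paper j = 1,2,... to j = 0,1,...; the set {Y_{i,j}} is enumerated as the
   sequence k |-> Y (k mod n) (k div n). *)
Definition independence_condition (R : realType) (d : measure_display)
  (T : measurableType d) (P : probability T R) (X : nat -> T -> R) : Prop :=
  forall (n : nat) (a : nat -> R), (2 <= n)%N ->
    a 0%N = 0 -> a n = 1 -> (forall i, (i < n)%N -> a i < a i.+1) ->
    exists (d' : measure_display) (T' : measurableType d')
           (P' : probability T' R) (Y : nat -> nat -> T' -> R),
      (forall i j, measurable_fun [set: T'] (Y i j)) /\
      same_set_distribution P X P' (fun k => Y (k %% n)%N (k %/ n)%N) /\
      (forall i j, (i < n)%N -> {ae P', forall w, a i <= Y i j w < a i.+1}) /\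
      indep_seqs P' n Y.

Definition dense01 (R : realType) (S : set R) : Prop :=
  forall a b : R, 0 <= a -> a < b -> b <= 1 -> exists2 x, S x & a < x < b.

Definition lebesgue_null_tuple (R : realType) (n : nat) (B : set (n.-tuple R))
  : Prop :=
  forall eps : R, 0 < eps ->
    exists lo hi : nat -> 'I_n -> R,
      (forall k i, lo k i <= hi k i) /\
      (forall x, B x -> exists k, forall i, lo k i <= tnth x i <= hi k i) /\
      (forall N, \sum_(k < N) \prod_(i < n) (hi k i - lo k i) <= eps).

Definition joint_law_abs_cont (R : realType) (d : measure_display)
  (T : measurableType d) (P : probability T R) (X : nat -> T -> R) (n : nat)
  : Prop :=
  forall B : set (n.-tuple R), measurable B -> lebesgue_null_tuple B ->
    P [set w | B [tuple X i w | i < n]] = 0%E.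

From HB Require Import structures.
From mathcomp Require Import all_boot all_order all_algebra.
From mathcomp Require Import all_classical all_reals all_analysis.
From mathcomp Require Import measurable_realfun lra.
Import Order.TTheory GRing.Theory Num.Theory.
Local Open Scope classical_set_scope.
Local Open Scope ring_scope.
Set Implicit Arguments. Unset Strict Implicit. Unset Printing Implicit Defensive.

(* Outside the null event where two X_k coincide, the points X_1, ..., X_n
   lie in pairwise distinct cells [c_k/m, (c_k+1)/m) of some grid of mesh 1/m,
   so it suffices to show that, for every m and injective c, the event
   "(X_1, ..., X_n) in B and each X_k in cell c_k" is null.  This event is
   contained in one that only depends on the range of the sequence X, so by
   the independence condition for the grid (i/m)_i it has the probability of
   the same event for the sequence (Y_{i,j}).  There, almost surely Y_{i,j}
   lies in cell i, which forces the tuple to be (Y_{c_k,j_k})_k for some j: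
   its coordinates are independent, and their laws are absolutely continuous
   because X avoids Lebesgue-null sets.  Truncating the Radon-Nikodym
   densities at level M bounds the probability of a box by M^n times its
   volume, hence the tuple falls in the Lebesgue-null set B with probability
   zero. *)

Section Rseq_measurable.
Variable R : realType.

Lemma measurable_coord (k : nat) :
  measurable_fun [set: Rseq R] (fun x => x k).
Proof. by move=> _ A mA; apply: sub_sigma_algebra; exists k => //; exists A. Qed.

Lemma measurable_coord_preimage (k : nat) (A : set R) : measurable A ->
  measurable [set x : Rseq R | A (x k)].
Proof.
by move=> mA; rewrite -[X in measurable X]setTI; exact: measurable_coord.
Qed.

Lemma measurable_fun_Rseq d (T : measurableType d) (f : nat -> T -> R) :
  (forall k, measurable_fun [set: T] (f k)) ->
  measurable_fun [set: T] (fun w => (fun k => f k w) : Rseq R).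
Proof.
move=> mf; apply: measurability => //.
move=> _ [_ [k _ [A mA <-]] <-].
by rewrite !setTI -[X in measurable X]setTI; exact: mf.
Qed.

Lemma measurable_Rseq_preimage d (T : measurableType d) (f : nat -> T -> R)
    (F : set (Rseq R)) :
  (forall k, measurable_fun [set: T] (f k)) -> measurable F ->
  measurable [set w | F (fun k => f k w)].
Proof.
by move=> mf mF; rewrite -[X in measurable X]setTI; exact: measurable_fun_Rseq.
Qed.

Lemma measurable_tuple_preimage d (T : measurableType d) (n : nat)
    (f : 'I_n -> T -> R) (B : set (n.-tuple R)) :
  (forall k, measurable_fun [set: T] (f k)) -> measurable B ->
  measurable [set w | B [tuple f k w | k < n]].
Proof.
move=> mf; have mt : measurable_fun [set: T] (fun w => [tuple f k w | k < n]).
  apply/measurable_fun_tnthP => k.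
  by apply: eq_measurable_fun (mf k) => w _; rewrite /= tnth_mktuple.
by move=> mB; rewrite -[X in measurable X]setTI; exact: mt.
Qed.

End Rseq_measurable.

Lemma probability_setI_full d (T : measurableType d) (R : realType)
    (P : probability T R) (A E : set T) :
  measurable A -> measurable E -> P E = 1%E -> P A = P (A `&` E).
Proof.
move=> mA mE PE.
have PEC0 : P (~` E) = 0%E by rewrite probability_setC // PE subee.
have PAE0 : P (A `\` E) = 0%E.
  apply: (subset_measure0 _ _ _ PEC0) => //; first exact: measurableD.
  exact: measurableC.
by rewrite -[RHS]add0e -PAE0; exact: measureDI.
Qed.

Definition range_invariant (R : realType) (F : set (Rseq R)) : Prop :=
  forall x y : Rseq R, range x = range y -> F x -> F y.

Lemma same_set_distribution_range_invariant (R : realType)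
    d1 (T1 : measurableType d1) (P1 : probability T1 R) (X : nat -> T1 -> R)
    d2 (T2 : measurableType d2) (P2 : probability T2 R) (Y : nat -> T2 -> R)
    (F : set (Rseq R)) :
  same_set_distribution P1 X P2 Y -> measurable F -> range_invariant F ->
  P1 [set w | F (fun k => X k w)] = P2 [set w | F (fun k => Y k w)].
Proof.
move=> [mu [mu1 [mu2 [E [mE [Erange muE]]]]]] mF Finv.
rewrite -mu1 // -mu2 // (probability_setI_full _ mE muE); last first.
  exact: measurableX.
rewrite [RHS](probability_setI_full _ mE muE); last exact: measurableX.
congr (mu _); apply/seteqP; split => -[x y] [[Fx Fy] Exy]; split => //.
- by split => //; exact: Finv (Erange _ Exy) Fx.
- by split => //; apply: Finv Fy; rewrite (Erange _ Exy).
Qed.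

Section lebesgue_density.
Context (R : realType).
Variable mu : {finite_measure set (measurableTypeR R) -> \bar R}.
Hypothesis mu_ac : mu `<< (@lebesgue_measure R).

Let nu := charge_of_finite_measure mu.
Let f := Radon_Nikodym nu (@lebesgue_measure R).

Definition density_wrt_lebesgue : R -> R := fine \o f.

Let nu_ac : nu `<< (@lebesgue_measure R). Proof. exact: mu_ac. Qed.

Let f_integrable : (@lebesgue_measure R).-integrable [set: R] f.
Proof. exact: Radon_Nikodym_integrable. Qed.

Lemma measurable_density_wrt_lebesgue :
  measurable_fun [set: R] density_wrt_lebesgue.
Proof.
exact: measurableT_comp (fine_measurable measurableT)
  (measurable_int _ f_integrable).
Qed.

Lemma measurable_density_le (M : R) :
  measurable [set x | density_wrt_lebesgue x <= M].
Proof.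
rewrite -[X in measurable X]setTI.
have := measurable_density_wrt_lebesgue measurableT (measurable_itv `]-oo, M]).
by congr measurable; apply/seteqP; split => x /=; rewrite in_itv.
Qed.

Lemma measure_itv_density_le (M lo hi : R) : 0 <= M -> lo <= hi ->
  (mu (`[lo, hi] `&` [set x | (density_wrt_lebesgue x <= M)%R])
    <= (M * (hi - lo))%:E)%E.
Proof.
move=> M0 lohi; set A := _ `&` _.
have mA : measurable A by apply: measurableI => //; exact: measurable_density_le.
have -> : mu A = (\int[lebesgue_measure]_(x in A) f x)%E.
  exact: (Radon_Nikodym_integral nu_ac mA).
have fA : (@lebesgue_measure R).-integrable A f.
  exact: integrableS f_integrable.
apply: (@le_trans _ _ (\int[lebesgue_measure]_(x in A) f^\+ x)%E).
  apply: le_integral => //; first exact: integrable_funepos.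
  by move=> x _; rewrite funeposE le_max lexx.
apply: (@le_trans _ _ (\int[lebesgue_measure]_(x in A) (cst M%:E x))%E).
  apply: ge0_le_integral => //.
  - by apply: measurable_funepos; exact: measurable_int fA.
  - move=> x [_ /= fxM]; rewrite funeposE ge_max lee_fin M0 andbT.
    have fx : f x \is a fin_num := Radon_Nikodym_fin_num x nu_ac.
    by rewrite -(fineK fx) lee_fin.
rewrite integral_cst // EFinM lee_wpmul2l ?lee_fin //.
apply: (@le_trans _ _ (lebesgue_measure `[lo, hi])).
  by apply: le_measure; rewrite ?inE //; exact: subIsetl.
rewrite lebesgue_measure_itv /= lte_fin.
by case: ltP => // _; rewrite lee_fin subr_ge0.
Qed.

End lebesgue_density.

Lemma lee_prod (R : realDomainType) (I : Type) (s : seq I) (a b : I -> \bar R) :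
  (forall i, 0 <= a i)%E -> (forall i, a i <= b i)%E ->
  (\prod_(i <- s) a i <= \prod_(i <- s) b i)%E.
Proof.
move=> a0 ab; elim: s => [|i s IHs]; first by rewrite !big_nil.
by rewrite !big_cons lee_pmul // prode_ge0.
Qed.

Definition law_abs_cont d (T : measurableType d) (R : realType)
    (P : probability T R) (Z : T -> R) : Prop :=
  forall C : set R, measurable C -> lebesgue_measure C = 0%E ->
    P (Z @^-1` C) = 0%E.

Definition indep_family d (T : measurableType d) (R : realType)
    (P : probability T R) (I : finType) (Z : I -> T -> R) : Prop :=
  forall C : I -> set R, (forall i, measurable (C i)) ->
    P (\bigcap_i Z i @^-1` C i) = (\prod_i P (Z i @^-1` C i))%E.

Section indep_abs_cont.
Context d (T : measurableType d) (R : realType) (P : probability T R).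
Variables (n : nat) (Z : 'I_n -> T -> R).
Hypothesis mZ : forall k, measurable_fun [set: T] (Z k).
Hypothesis Z_ac : forall k, law_abs_cont P (Z k).
Hypothesis Z_indep : indep_family P Z.

(* The codomain [measurableTypeR R] is the one carrying [lebesgue_measure],
   as required for Radon-Nikodym derivatives. *)
Let law k := distribution P
  (@mfun_Sub _ _ T (measurableTypeR R) (Z k) (mem_set (mZ k))).

Let law_ac k : law k `<< (@lebesgue_measure R).
Proof. by apply/null_content_dominatesP => C mC; exact: Z_ac. Qed.

Let f k := density_wrt_lebesgue (law k).

Let sublevel k (M : R) := [set x | f k x <= M].

Let measurable_sublevel k (M : R) : measurable (sublevel k M).
Proof. exact: (measurable_density_le (law_ac k)). Qed.

Let bounded (M : R) := \bigcap_k Z k @^-1` sublevel k M.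

Let measurable_bounded (M : R) : measurable (bounded M).
Proof.
apply: fin_bigcap_measurable => // k _.
by rewrite -[X in measurable X]setTI; exact: (mZ k measurableT).
Qed.

Lemma indep_box_sublevel_le (M : R) (lo hi : 'I_n -> R) :
  0 <= M -> (forall k, lo k <= hi k) ->
  (P (\bigcap_k Z k @^-1` (`[lo k, hi k] `&` sublevel k M))
    <= (M ^+ n * \prod_k (hi k - lo k))%:E)%E.
Proof.
move=> M0 lohi; rewrite Z_indep => [|k]; last exact: measurableI.
apply: (@le_trans _ _ (\prod_k (M * (hi k - lo k))%:E)%E).
  apply: lee_prod => k; first exact: measure_ge0.
  exact: (measure_itv_density_le (law_ac k) M0 (lohi k)).
by rewrite prodEFin big_split /= prodr_const card_ord.
Qed.

Lemma indep_null_tuple_bounded (M : R) (B : set (n.-tuple R)) :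
  0 <= M -> measurable B -> lebesgue_null_tuple B ->
  P ([set w | B [tuple Z k w | k < n]] `&` bounded M) = 0%E.
Proof.
move=> M0 mB nullB; set E := _ `&` _.
have mE : measurable E.
  by apply: measurableI => //; exact: measurable_tuple_preimage.
apply/eqP; rewrite eq_le measure_ge0 andbT; apply/lee_addgt0Pr => e e0.
have Mn0 : 0 < M ^+ n + 1 by rewrite ltr_wpDl // exprn_ge0.
have [lo [hi [lohi [cover vol_le]]]] :=
  nullB (e / (M ^+ n + 1)) (divr_gt0 e0 Mn0).
pose box m := \bigcap_k Z k @^-1` (`[lo m k, hi m k] `&` sublevel k M).
have mbox m : measurable (box m).
  apply: fin_bigcap_measurable => // k _; rewrite -[X in measurable X]setTI.
  exact/(mZ k measurableT)/measurableI.
have E_box : E `<=` \bigcup_m box m.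
  move=> w [Bw bw]; have [m Bm] := cover _ Bw; exists m => // k _; split.
  - by have := Bm k; rewrite tnth_mktuple /= in_itv.
  - exact: bw.
apply: (le_trans (measure_sigma_subadditive _ mbox mE E_box)); rewrite add0e.
apply: (@le_trans _ _
  (\sum_(m <oo) (M ^+ n * \prod_k (hi m k - lo m k))%:E)%E).
  apply: lee_nneseries => [m _ _|m _]; first exact: measure_ge0.
  exact: indep_box_sublevel_le M0 (lohi m).
have vol_ge0 m : 0 <= M ^+ n * \prod_k (hi m k - lo m k).
  by rewrite mulr_ge0 ?exprn_ge0 // prodr_ge0 // => k _; rewrite subr_ge0.
apply: lime_le; first by apply: is_cvg_nneseries => m _ _; rewrite lee_fin.
apply: nearW => N; rewrite sumEFin lee_fin -mulr_sumr big_mkord.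
apply: (le_trans (ler_wpM2l (exprn_ge0 _ M0) (vol_le N))).
by rewrite mulrCA ger_pMr // ler_pdivrMr // mul1r lerDl.
Qed.

Lemma prob_unbounded_density_cvg0 : P (~` bounded M%:R) @[M --> \oo] --> 0%E.
Proof.
have no_bound : \bigcap_M ~` bounded M%:R = set0.
  apply/seteqP; split => // w unb.
  apply: (unb (Num.truncn (\sum_k `|f k (Z k w)|)).+1 I) => k _.
  apply/ltW/(le_lt_trans _ (truncnS_gt _)).
  apply: (le_trans (ler_norm _)).
  by rewrite (bigD1 k) //= lerDl sumr_ge0.
rewrite -(measure0 P) -no_bound; apply: nonincreasing_cvg_mu.
- by rewrite (le_lt_trans (probability_le1 _ _)) ?ltey //; exact: measurableC.
- by move=> M; exact: measurableC.
- by apply: bigcap_measurableType => M _; exact: measurableC.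
- apply/nonincreasing_seqP => M; apply/subsetPset; apply: subsetC => w bw k _.
  by apply: le_trans (bw k I) _; rewrite ler_nat.
Qed.

Lemma indep_abs_cont_null_tuple (B : set (n.-tuple R)) :
  measurable B -> lebesgue_null_tuple B ->
  P [set w | B [tuple Z k w | k < n]] = 0%E.
Proof.
move=> mB nullB; set E := [set w | _].
have mE : measurable E by exact: measurable_tuple_preimage.
have E_le M : (P E <= P (~` bounded M%:R))%E.
  have -> : P E = (P (E `\` bounded M%:R) + P (E `&` bounded M%:R))%E.
    exact: measureDI.
  rewrite indep_null_tuple_bounded // adde0.
  by apply: le_measure; rewrite ?inE; [exact: measurableD|exact: measurableC|].
apply/eqP; rewrite eq_le measure_ge0 andbT.
rewrite -(cvg_lim _ prob_unbounded_density_cvg0) //.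
apply: lime_ge; last exact: nearW.
by apply/cvg_ex; exists 0%E; exact: prob_unbounded_density_cvg0.
Qed.

End indep_abs_cont.

Lemma indep_seqs_pick d (T : measurableType d) (R : realType)
    (P : probability T R) (m n : nat) (Y : nat -> nat -> T -> R)
    (s : 'I_n -> 'I_m) (j : 'I_n -> nat) :
  indep_seqs P m Y -> injective s -> indep_family P (fun k => Y (s k) (j k)).
Proof.
move=> indY s_inj C mC.
pose A i := \bigcap_(k in [set k | s k = i :> nat])
  [set y : Rseq R | C k (y (j k))].
have mA i : measurable (A i).
  apply: fin_bigcap_measurable => [|k _]; first exact: finite_finset.
  exact: measurable_coord_preimage.
pose Ev (i : nat) := [set w | A i (fun l => Y i l w)].
have Ev_s k : Ev (s k) = Y (s k) (j k) @^-1` C k.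
  apply/seteqP; split => w /=; first by apply.
  by move=> Cw k' /val_inj/s_inj ->.
have Ev_out (i : 'I_m) : i \notin s @: [set: 'I_n] -> P (Ev i) = 1%E.
  move=> /imsetP s_i; rewrite (_ : Ev i = setT) ?probability_setT //.
  apply/seteqP; split => // w _ k /= ski.
  by exfalso; apply: s_i; exists k; rewrite ?in_setT //; exact/val_inj/esym.
have -> : \bigcap_k Y (s k) (j k) @^-1` C k = \bigcap_(i in `I_m) Ev i.
  apply/seteqP; split => w /= Cw.
  - by move=> i _ k <-; exact: Cw.
  - by move=> k _; rewrite -Ev_s; apply: Cw => /=.
rewrite (indY A mA) (bigID (mem (s @: [set: 'I_n]))) /=.
rewrite [X in (_ * X)%E]big1 ?mule1; last by move=> i /Ev_out.
rewrite big_imset /=; last by move=> k k' _ _; exact: s_inj.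
by apply: eq_big => [k|k _]; rewrite ?in_setT // -Ev_s.
Qed.

Section grid_cells.
Variable R : archiRealFieldType.

Definition cell (m c : nat) (x : R) : Prop := c%:R / m%:R <= x < c.+1%:R / m%:R.

Lemma cellP (m c : nat) (x : R) : (0 < m)%N ->
  cell m c x <-> c%:R <= m%:R * x < c.+1%:R.
Proof.
by move=> m0; rewrite /cell ler_pdivrMr ?ltr_pdivlMr ?ltr0n // ![x * _]mulrC.
Qed.

Lemma cell_truncn (m : nat) (x : R) : (0 < m)%N -> 0 <= x ->
  cell m (Num.truncn (m%:R * x)) x.
Proof. by move=> m0 x0; apply/cellP/truncn_itv/mulr_ge0. Qed.

Lemma cell_uniq (m c c' : nat) (x : R) : (0 < m)%N ->
  cell m c x -> cell m c' x -> c = c'.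
Proof.
move=> m0 /(cellP _ _ m0)/andP[lo hi] /(cellP _ _ m0)/andP[lo' hi'].
have cc' : c%:R < c'.+1%:R :> R by exact: le_lt_trans lo hi'.
have c'c : c'%:R < c.+1%:R :> R by exact: le_lt_trans lo' hi.
rewrite ltr_nat ltnS in cc'; rewrite ltr_nat ltnS in c'c.
by apply/eqP; rewrite eqn_leq cc' c'c.
Qed.

Lemma cell_dist_lt (m c : nat) (x y : R) : (0 < m)%N ->
  cell m c x -> cell m c y -> m%:R * `|x - y| < 1.
Proof.
move=> m0 /(cellP _ _ m0)/andP[xlo xhi] /(cellP _ _ m0)/andP[ylo yhi].
rewrite -[m%:R]ger0_norm ?ler0n // -normrM mulrBr ltr_norml.
rewrite -natr1 in xhi yhi; apply/andP; split; lra.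
Qed.

Lemma separating_grid (n : nat) (x : 'I_n -> R) :
  (forall k, 0 <= x k < 1) -> injective x ->
  exists m (c : 'I_n -> 'I_m),
    [/\ (2 <= m)%N, injective c & forall k, cell m (c k) (x k)].
Proof.
move=> x01 x_inj.
pose m := (\sum_k \sum_l Num.truncn (`|x k - x l|^-1)%R)%N.+2.
have m0 : (0 < m)%N by [].
have sep k l : k != l -> 1 < m%:R * `|x k - x l|.
  move=> kl; have xkl : 0 < `|x k - x l|.
    by rewrite normr_gt0 subr_eq0; apply: contra kl => /eqP/x_inj ->.
  rewrite -ltr_pdivrMr // mul1r; apply: (lt_le_trans (truncnS_gt _)).
  rewrite ler_nat /m ltnS (leq_trans _ (leqnSn _)) //.
  by rewrite (bigD1 k) //= (bigD1 l) //= -addnA leq_addr.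
have c_lt k : (Num.truncn (m%:R * x k) < m)%N.
  have /andP[x0 x1] := x01 k.
  by rewrite truncn_lt_nat ?mulr_ge0 // -[ltRHS]mulr1 ltr_pM2l ?ltr0n.
exists m, (fun k => Ordinal (c_lt k)); split => // [k l /(congr1 val) /= ckl|k].
  apply/eqP; apply: contraT => kl.
  have /andP[xk0 _] := x01 k; have /andP[xl0 _] := x01 l.
  have ck := cell_truncn m0 xk0; rewrite ckl in ck.
  have := cell_dist_lt m0 ck (cell_truncn m0 xl0).
  by rewrite ltNge (ltW (sep k l kl)).
by have /andP[xk0 _] := x01 k; exact: cell_truncn.
Qed.

End grid_cells.

Lemma negligible_bigcup_countable d (T : measurableType d) (R : realType)
    (mu : {measure set T -> \bar R}) (I : countType) (D : set I)
    (F : I -> set T) :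
  (forall i, D i -> mu.-negligible (F i)) ->
  mu.-negligible (\bigcup_(i in D) F i).
Proof.
move=> nF.
pose G p := if unpickle p is Some i then [set w | D i /\ F i w] else set0.
apply: (@negligibleS _ _ _ _ (\bigcup_p G p)).
  by move=> w [i Di Fiw]; exists (pickle i) => //; rewrite /G pickleK.
apply: negligible_bigcup => p; rewrite /G; case: unpickle => [i|]; last first.
  exact: negligible_set0.
have [Di|nDi] := pselect (D i); first by apply: negligibleS (nF i Di) => w [].
by apply: negligibleS (negligible_set0 _) => w [].
Qed.

Lemma coincidence_negligible d (T : measurableType d) (R : realType)
    (P : probability T R) (X : nat -> T -> R) :
  (forall k, measurable_fun [set: T] (X k)) ->
  (forall k l, k <> l -> P [set w | X k w = X l w] = 0%E) ->
  P.-negligible [set w | exists k l, k <> l /\ X k w = X l w].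
Proof.
move=> mX distinct.
apply: (@negligibleS _ _ _ _ (\bigcup_(p in [set p : nat * nat | p.1 <> p.2])
  [set w | X p.1 w = X p.2 w])).
  by move=> w [k [l [kl Xkl]]]; exists (k, l).
apply: negligible_bigcup_countable => -[k l] /= kl.
apply/negligibleP; last exact: distinct.
have -> : [set w | X k w = X l w] = [set: T] `&` (X k \- X l) @^-1` [set 0].
  apply/seteqP; split => w /=; first by move=> ->; rewrite subrr.
  by move=> [_ /eqP]; rewrite subr_eq0 => /eqP.
by have := measurable_funB (mX k) (mX l) measurableT (measurable_set1 0).
Qed.

Lemma measurable_cell (R : realType) (m c : nat) : measurable (@cell R m c).
Proof.
exact: (measurable_itv `[c%:R / m%:R, c.+1%:R / m%:R[).
Qed.

Section grid_events.
Context (R : realType) d (T : measurableType d) (P : probability T R).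
Variable X : nat -> T -> R.
Hypothesis mX : forall k, measurable_fun [set: T] (X k).
Hypothesis X01 : forall k w, 0 < X k w < 1.
Hypothesis X_avoids_null : forall B : set R, measurable B -> B `<=` `]0, 1[ ->
  lebesgue_measure B = 0%E -> {ae P, forall w, forall k, ~ B (X k w)}.
Hypothesis X_indep : independence_condition P X.

Lemma coupled_law_abs_cont d' (T' : measurableType d') (P' : probability T' R)
    (Y : nat -> T' -> R) :
  (forall k, measurable_fun [set: T'] (Y k)) ->
  same_set_distribution P X P' Y ->
  forall k, law_abs_cont P' (Y k).
Proof.
move=> mY coupled k C mC C0.
pose F := \bigcup_l [set x : Rseq R | C (x l)].
have mF : measurable F.
  by apply: bigcupT_measurable => l; exact: measurable_coord_preimage.
have invF : range_invariant F.
  move=> x y xy [l _ Cxl].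
  have [l' _ yl'] : range y (x l) by rewrite -xy; exists l.
  by exists l' => //=; rewrite yl'.
have X_misses_C : P [set w | F (fun l => X l w)] = 0%E.
  apply/negligibleP; first exact: measurable_Rseq_preimage.
  have mC01 : measurable (C `&` `]0, 1[) by exact: measurableI.
  have C01_null : lebesgue_measure (C `&` `]0, 1[) = 0%E.
    by apply: (subset_measure0 _ _ _ C0) => //; exact: subIsetl.
  apply: negligibleS (X_avoids_null mC01 (@subIsetr _ _ _) C01_null).
  by move=> w [l _ Cl] /(_ l); apply; split => //=; rewrite in_itv; exact: X01.
apply/eqP; rewrite -measure_le0 -X_misses_C.
rewrite (same_set_distribution_range_invariant coupled mF invF).
apply: le_measure; rewrite ?inE; last by move=> w Cw; exists k.
  by rewrite -[X in measurable X]setTI; exact: mY.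
exact: measurable_Rseq_preimage.
Qed.

Variables (n : nat) (B : set (n.-tuple R)).
Hypotheses (mB : measurable B) (nullB : lebesgue_null_tuple B).

Definition grid_event (m : nat) (c : 'I_n -> 'I_m) : set T :=
  [set w | B [tuple X k w | k < n] /\ forall k, cell m (c k) (X k w)].

Definition grid_seq_event (m : nat) (c : 'I_n -> 'I_m) : set (Rseq R) :=
  [set x | exists j : 'I_n -> nat,
     B [tuple x (j k) | k < n] /\ forall k, cell m (c k) (x (j k))].

Lemma measurable_grid_seq_event m (c : 'I_n -> 'I_m) :
  measurable (grid_seq_event c).
Proof.
rewrite (_ : grid_seq_event c = \bigcup_(t : n.-tuple nat)
    ([set x | B [tuple x (tnth t k) | k < n]] `&`
     \bigcap_k [set x | cell m (c k) (x (tnth t k))])).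
  apply: countable_bigcupT_measurable => [|t]; first exact: countableP.
  apply: measurableI.
    by apply: measurable_tuple_preimage => // k; exact: measurable_coord.
  apply: fin_bigcap_measurable => // k _.
  by apply: measurable_coord_preimage; exact: measurable_cell.
apply/seteqP; split => [x [j [Bj cj]]|x [t _ [Bt ct]]].
- exists [tuple j k | k < n] => //; split => [|k _] /=; first last.
    by rewrite tnth_mktuple.
  suff -> : [tuple x (tnth [tuple j k | k < n] k) | k < n] =
            [tuple x (j k) | k < n] by [].
  by apply: eq_mktuple => k; rewrite tnth_mktuple.
- by exists (tnth t); split => // k; exact: ct.
Qed.

Lemma range_invariant_grid_seq_event m (c : 'I_n -> 'I_m) :
  range_invariant (grid_seq_event c).
Proof.
move=> x y xy [j [Bj cj]].
have /boolp.choice[j' yj'] : forall k, exists l, y l = x (j k).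
  move=> k; have [l _ ylx] : range y (x (j k)) by rewrite -xy; exists (j k).
  by exists l.
exists j'; split => [|k]; last by rewrite yj'.
suff -> : [tuple y (j' k) | k < n] = [tuple x (j k) | k < n] by [].
by apply: eq_mktuple => k; rewrite yj'.
Qed.

Lemma coupled_grid_seq_event_negligible m (c : 'I_n -> 'I_m)
    d' (T' : measurableType d') (P' : probability T' R)
    (Y : nat -> nat -> T' -> R) :
  (0 < m)%N -> injective c -> (forall i j, measurable_fun [set: T'] (Y i j)) ->
  same_set_distribution P X P' (fun k => Y (k %% m)%N (k %/ m)%N) ->
  (forall i j, (i < m)%N -> {ae P', forall w, cell m i (Y i j w)}) ->
  indep_seqs P' m Y ->
  P'.-negligible
    [set w | grid_seq_event c (fun k => Y (k %% m)%N (k %/ m)%N w)].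
Proof.
move=> m0 c_inj mY coupled Y_cells indY.
have Y_enum i j : (i < m)%N ->
    Y i j = Y ((i + j * m) %% m)%N ((i + j * m) %/ m)%N.
  by move=> im; rewrite addnC modnMDl modn_small // divnMDl // divn_small ?addn0.
pose bad_cell := \bigcup_(p in [set p : nat * nat | (p.1 < m)%N])
  ~` [set w | cell m p.1 (Y p.1 p.2 w)].
have bad_cell_negligible : P'.-negligible bad_cell.
  by apply: negligible_bigcup_countable => -[i j] /= im; exact: Y_cells.
pose tuple_event (l : n.-tuple nat) :=
  [set w | B [tuple Y (c k) (tnth l k) w | k < n]].
have tuple_event_negligible l : P'.-negligible (tuple_event l).
  apply/negligibleP; first exact: measurable_tuple_preimage.
  apply: indep_abs_cont_null_tuple => // [k|]; last exact: indep_seqs_pick.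
  rewrite (Y_enum _ _ (ltn_ord (c k))).
  by apply: (coupled_law_abs_cont _ coupled) => l'; exact: mY.
apply: negligibleS (negligibleU bad_cell_negligible
  (negligible_bigcup_countable (D := setT)
    (fun l _ => tuple_event_negligible l))).
move=> w [j [Bj cj]]; have [|good] := pselect (bad_cell w); first by left.
right; exists [tuple (j k %/ m)%N | k < n] => //; rewrite /tuple_event /=.
have jc k : (j k %% m)%N = c k.
  apply: (cell_uniq m0 _ (cj k)); apply: contrapT => ncell; apply: good.
  by exists (j k %% m, j k %/ m)%N => //=; exact: ltn_pmod.
suff -> : [tuple Y (c k) (tnth [tuple (j k %/ m)%N | k < n] k) w | k < n] =
          [tuple Y (j k %% m)%N (j k %/ m)%N w | k < n] by [].
by apply: eq_mktuple => k; rewrite tnth_mktuple jc.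
Qed.

Lemma grid_event_negligible m (c : 'I_n -> 'I_m) :
  (2 <= m)%N -> injective c -> P.-negligible (grid_event c).
Proof.
move=> m2 c_inj; have m0 : (0 < m)%N by exact: leq_trans m2.
have mR0 : 0 < (m%:R : R) by rewrite ltr0n.
have [|||d' [T' [P' [Y [mY [coupled [Y_cells indY]]]]]]] :=
  @X_indep m (fun i => i%:R / m%:R) m2.
- by rewrite mul0r.
- by rewrite divff // gt_eqF.
- by move=> i _; rewrite ltr_pM2r ?invr_gt0 // ltr_nat.
have mF := measurable_grid_seq_event c.
have mXF := measurable_Rseq_preimage mX mF.
have mYF :=
  measurable_Rseq_preimage (fun k => mY (k %% m)%N (k %/ m)%N) mF.
have PXF : P [set w | grid_seq_event c (fun k => X k w)] = 0%E.
  rewrite (same_set_distribution_range_invariant coupled mF); last first.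
    exact: range_invariant_grid_seq_event.
  by apply/(negligibleP _ mYF); exact: coupled_grid_seq_event_negligible.
apply: negligibleS (proj2 (negligibleP _ mXF) PXF) => w [Bw cw].
by exists (fun k : 'I_n => val k).
Qed.

Lemma tuple_event_sub_grid_events :
  [set w | B [tuple X k w | k < n]] `<=`
  [set w | exists k l, k <> l /\ X k w = X l w] `|`
  \bigcup_(g in [set g : {m : nat & {ffun 'I_n -> 'I_m}} |
                 (2 <= tag g)%N /\ injective (tagged g)])
    grid_event (tagged g).
Proof.
move=> w Bw.
have [|distinct] := pselect (exists k l, k <> l /\ X k w = X l w).
  by left.
have x_inj : injective (fun k : 'I_n => X k w).
  move=> k l Xkl; apply: val_inj; apply: contrapT => kl.
  by apply: distinct; exists k, l.
have x01 k : 0 <= X k w < 1 by have /andP[/ltW -> ->] := X01 k w.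
have [m [c [m2 c_inj cells]]] := separating_grid x01 x_inj.
right; exists (Tagged (fun m => {ffun 'I_n -> 'I_m}) [ffun k => c k]) => /=.
  by split => // k l; rewrite !ffunE => /c_inj.
by split => // k; rewrite ffunE.
Qed.

End grid_events.

Unset Implicit Arguments. Set Strict Implicit. Set Printing Implicit Defensive.

Theorem lemma5p10 (R : realType) (d : measure_display) (T : measurableType d)
  (P : probability T R) (X : nat -> T -> R) :
  (forall k, measurable_fun [set: T] (X k)) ->
  (forall k w, 0 < X k w < 1) ->
  {ae P, forall w, dense01 (range (fun k => X k w))} ->
  independence_condition P X ->
  (forall B : set R, measurable B -> B `<=` `]0, 1[ ->
     lebesgue_measure B = 0%E ->
     {ae P, forall w, forall k, ~ B (X k w)}) ->
  (forall k l : nat, k <> l -> P [set w | X k w = X l w] = 0%E) ->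
  forall n : nat, joint_law_abs_cont P X n.
Proof.
move=> mX X01 _ X_indep X_avoids_null distinct n B mB nullB.
apply/negligibleP; first exact: measurable_tuple_preimage.
apply: negligibleS (tuple_event_sub_grid_events X01 (B := B)) _.
apply: negligibleU; first exact: coincidence_negligible.
apply: negligible_bigcup_countable => -[m c] [/= m2 c_inj].
exact: grid_event_negligible.
Qed.
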